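(* Let $q\ge2$, $\mathcal{S}$ an SLP deriving $T$ with $|T|\ge q$, and $\phi$ a fingerprint function that is collision free on the substrings of length $q-1$ of $T$ (i.e. for any two length-$(q-1)$ substrings $u,v$ of $T$, $\phi(u)=\phi(v)$ iff $u=v$). Let $G$ be the graph constructed from $\mathcal{S}$ by inserting relevant substrings, and let $C$ be the CS-tree built from $G$, both as described in the context. Then $C$ contains each distinct q-gram of $T$ exactly once, i.e., for each distinct q-gram $s$ of $T$ there is exactly one downward path of $q$ edges in $C$ whose edge labels, read from top to bottom, spell $s$.
   Context: Strings are 0-indexed; $s[i:j]$ is the substring from position $i$ to $j$ inclusive. An SLP is a set of rules $X_1,\dots,X_n$, each $X_i=a$ or $X_i=X_lX_r$ ($l,r<i$); $t_{X_i}$ is the derived string, $|X_i|=|t_{X_i}|$, $T=t_{X_n}$; $occ(X_i)$ is the number of occurrences of $X_i$ in the derivation tree. For $X_i=X_lX_r$ with $|X_i|\ge q$, $r_{X_i}=t_{X_i}[\max(0,|X_l|-q+1):\min(|X_l|+q-2,|X_i|-1)]$. Construction of $G$: start with an empty directed graph whose nodes are keyed by fingerprints. For each rule $X_i=X_lX_r$ with $|X_i|\ge q$ (any order), with $r=r_{X_i}$: create node $\phi(r[0:q-2])$ if absent; for $j=1,\dots,|r|-q+1$, create node $\phi(r[j:j+q-2])$ if absent, create an edge labelled $r[j+q-2]$ with counter $0$ from node $\phi(r[j-1:j+q-3])$ to node $\phi(r[j:j+q-2])$ if no edge in that direction between them exists, and add $occ(X_i)$ to its counter. The start node is the node labelled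 $\phi(T[0:q-2])$. Construction of the CS-tree $C$ (a rooted tree with characters on edges): create a path of $q-1$ edges from a root $u_0$ down to $u_{q-1}$, the edge $u_{j-1}\to u_j$ labelled $T[j-1]$; $u_{q-1}$ corresponds to the start node of $G$ and gets its label. Do a depth-first traversal of $G$ from the start node along directed edges; when exploring an edge of $G$ from node $x$ (with tree node $\tau(x)$) to node $y$ having label $c$ and counter $m$: if $y$ is unvisited, create a tree node $\tau(y)$ as a child of $\tau(x)$ via an edge labelled $c$ with counter $m$, give $\tau(y)$ the fingerprint label of $y$, and continue the traversal from $y$; if $y$ was already visited, create a new leaf child of $\tau(x)$ via an edge labelled $c$ with counter $m$, labelled with the fingerprint label of $y$. *)

From mathcomp Require Import all_boot.
Set Implicit Arguments. Unset Strict Implicit. Unset Printing Implicit Defensive.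

Section CSTree.
Variables (A F : eqType).

(* s[i:j] (0-indexed, inclusive) *)
Definition substr (s : seq A) (i j : nat) : seq A := take (j - i).+1 (drop i s).

Definition is_qgram (q : nat) (T s : seq A) : Prop :=
  exists i, i + q <= size T /\ s = take q (drop i T).

(* Rule X_i (index i in the list) is either X_i = a or X_i = X_l X_r. *)
Inductive rule := Term of A | Pair of nat & nat.
Definition slp := seq rule.

Fixpoint derivs_aux (acc : seq (seq A)) (rs : seq rule) : seq (seq A) :=
  match rs with
  | [::] => acc
  | r :: rs' =>
      derivs_aux (rcons acc (match r with
                             | Term a => [:: a]
                             | Pair l r => nth [::] acc l ++ nth [::] acc r
                             end)) rs'
  end.

Definition tstr (S : slp) (i : nat) : seq A := nth [::] (derivs_aux [::] S) i.
Definition slp_text (S : slp) : seq A := tstr S (size S).-1.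

Definition slp_wf (S : slp) : Prop :=
  0 < size S /\
  forall i l r, onth S i = Some (Pair l r) -> l < i /\ r < i.

(* occ(X_i): number of occurrences of X_i in the derivation tree of T.
   Counts are propagated top-down (the root X_n occurs once). *)
Definition occ_step (S : slp) (cnt : seq nat) (j : nat) : seq nat :=
  match onth S j with
  | Some (Pair l r) =>
      let m := nth 0 cnt j in
      let c1 := set_nth 0 cnt l (nth 0 cnt l + m) in
      set_nth 0 c1 r (nth 0 c1 r + m)
  | _ => cnt
  end.

Definition occs (S : slp) : seq nat :=
  foldl (occ_step S) (set_nth 0 (nseq (size S) 0) (size S).-1 1)
        (rev (iota 0 (size S))).

Definition occ (S : slp) (i : nat) : nat := nth 0 (occs S) i.

(* r_{X_i} = t_{X_i}[max(0,|X_l|-q+1) : min(|X_l|+q-2, |X_i|-1)] *)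
Definition rel_sub (q : nat) (S : slp) (i : nat) : seq A :=
  match onth S i with
  | Some (Pair l r) =>
      let s := tstr S i in
      let L := size (tstr S l) in
      substr s (L.+1 - q) (minn (L + q - 2) (size s).-1)
  | _ => [::]
  end.

Record edge := Edge { esrc : F; elab : A; edst : F; ecnt : nat }.
Record graph := Graph { gnodes : seq F; gedges : seq edge }.

Definition add_node (g : graph) (x : F) : graph :=
  if x \in gnodes g then g else Graph (rcons (gnodes g) x) (gedges g).

Definition add_edge (g : graph) (x : F) (c : A) (y : F) (m : nat) : graph :=
  if has (fun e => (esrc e == x) && (edst e == y)) (gedges g) then
    Graph (gnodes g)
      [seq if (esrc e == x) && (edst e == y)
           then Edge (esrc e) (elab e) (edst e) (ecnt e + m) else e
      | e <- gedges g]
  else Graph (gnodes g) (rcons (gedges g) (Edge x c y (0 + m))).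

Definition insert_step (phi : seq A -> F) (q m : nat) (r : seq A)
    (g : graph) (j : nat) : graph :=
  let g1 := add_node g (phi (substr r j (j + q - 2))) in
  match onth r (j + q - 2) with
  | Some c => add_edge g1 (phi (substr r j.-1 (j + q - 3)))
                          c (phi (substr r j (j + q - 2))) m
  | None => g1
  end.

Definition insert_rule (phi : seq A -> F) (q : nat) (S : slp)
    (g : graph) (i : nat) : graph :=
  match onth S i with
  | Some (Pair _ _) =>
      if q <= size (tstr S i) then
        let r := rel_sub q S i in
        let g0 := add_node g (phi (take (q - 1) r)) in
        foldl (insert_step phi q (occ S i) r) g0 (iota 1 (size r - q + 1))
      else g
  | _ => g
  end.

(* rules processed in the order given by [ord] (any permutation of the rules) *)
Definition build_graph (phi : seq A -> F) (q : nat) (S : slp) (ord : seq nat)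
  : graph := foldl (insert_rule phi q S) (Graph [::] [::]) ord.

Definition out_edges (G : graph) (x : F) : seq (A * F * nat) :=
  [seq (elab e, edst e, ecnt e) | e <- gedges G & esrc e == x].

(* Tree node 0 is the root; the k-th entry (0-based) of the list describes
   tree node k+1: its parent, the label and counter of the edge from the
   parent, and its fingerprint label (if any). *)
Record tentry := TEntry { tpar : nat; tlab : A; tcnt : option nat; tfp : option F }.
Definition ctree := seq tentry.

(* path u_0 -> ... -> u_{q-1} spelling T[0:q-2]; u_{q-1} gets label st *)
Definition init_tree (q : nat) (T : seq A) (st : F) : ctree :=
  [seq TEntry p.1 p.2 None (if p.1.+1 == q.-1 then Some st else None)
  | p <- zip (iota 0 (q - 1)) (take (q - 1) T)].

(* Depth-first traversal: [ordr x] is the order in which the outgoing edges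
   of x are explored; [tx] is the tree node tau(x); the state is the tree
   built so far together with the list of visited graph nodes. *)
Fixpoint explore (ordr : F -> seq (A * F * nat)) (fuel : nat) (x : F)
    (tx : nat) (st : ctree * seq F) {struct fuel} : ctree * seq F :=
  match fuel with
  | 0 => st
  | fuel'.+1 =>
      foldl (fun st e =>
               let: (c, y, m) := e in
               let: (tr, vis) := st in
               if y \in vis then (rcons tr (TEntry tx c (Some m) (Some y)), vis)
               else explore ordr fuel' y (size tr).+1
                      (rcons tr (TEntry tx c (Some m) (Some y)), rcons vis y))
            st (ordr x)
  end.

(* fuel |nodes G| + 1 exceeds the recursion depth of the traversal *)
Definition cs_tree (phi : seq A -> F) (q : nat) (T : seq A) (G : graph)
    (ordr : F -> seq (A * F * nat)) : ctree :=
  let st := phi (take (q - 1) T) in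
  (explore ordr (size (gnodes G)).+1 st (q - 1) (init_tree q T st, [:: st])).1.

Definition tchild (C : ctree) (u v : nat) : bool :=
  if onth C v.-1 is Some e then (0 < v) && (tpar e == u) else false.

Definition tspell (C : ctree) (vs : seq nat) : seq A :=
  pmap (fun v => omap tlab (onth C v.-1)) vs.

(* (v0, vs): downward path v0 -> vs_1 -> ... -> vs_k of k = size vs edges *)
Definition down_path (C : ctree) (v0 : nat) (vs : seq nat) : Prop :=
  v0 <= size C /\ path (tchild C) v0 vs.

End CSTree.

From HB Require Import structures.
From mathcomp Require Import all_boot zify.
Set Implicit Arguments. Unset Strict Implicit. Unset Printing Implicit Defensive.

(* Every edge of G is created while scanning a relevant substring, an infix of T since the
   rule occurs in the derivation tree; so an edge x -c-> y reads a q-gram k c of T with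
   x = phi k and y = phi (behead (k c)).  By collision freedom an edge is determined by its
   source and its label, so the children of an expanded node carry distinct labels, and by
   induction down the tree the q-1 edges above a node with fingerprint y spell the
   (q-1)-gram whose fingerprint is y.  Conversely, every q-gram s of T lies inside a child of
   some rule or straddles its boundary, so it occurs in a relevant substring and yields an
   edge phi(s[0:q-2]) -> phi(s[1:q-1]); walking along T from the start node shows that all
   these sources are expanded by the traversal.  Hence s is spelled by the path ending at
   the child labelled s[q-1] of the tree node of phi(s[0:q-2]), and any path spelling s ends
   at a child of that same node with the same label. *)

Section SeqFacts.
Variable T : eqType.
Implicit Types s u w : seq T.

Lemma qgramP n w s : is_qgram n w s <-> size s = n /\ infix s w.
Proof.
split=> [[i [Hi ->]]|[<- /infixP [u [v ->]]]].
  rewrite size_takel ?size_drop; last lia.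
  by split=> //; exact: infix_trans (infix_take _ _) (infix_drop _ _).
exists (size u); split; first by rewrite !size_cat; lia.
by rewrite drop_size_cat // take_size_cat.
Qed.

Lemma nth_window x0 s o n i : i < n -> nth x0 (take n (drop o s)) i = nth x0 s (o + i).
Proof. by move=> Hi; rewrite nth_take // nth_drop. Qed.

Lemma onth_lt (X : Type) (s : seq X) i x : onth s i = Some x -> i < size s.
Proof. by move=> H; rewrite -onthTE H. Qed.

Lemma uniq_map_inj (U : eqType) (f : T -> U) s x y :
  uniq (map f s) -> x \in s -> y \in s -> f x = f y -> x = y.
Proof.
elim: s => //= a s IH /andP [Ha Hu]; rewrite !inE.
case/orP=> [/eqP ->|Hx]; case/orP=> [/eqP ->|Hy] // E.
- by move: Ha; rewrite E map_f.
- by move: Ha; rewrite -E map_f.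
- exact: IH.
Qed.

Lemma onth_rcons (X : Type) (s : seq X) z k :
  onth (rcons s z) k = if k < size s then onth s k else if k == size s then Some z else None.
Proof.
rewrite -cats1 onth_cat; case: ltnP => // Hk; case: eqP => [->|Hne]; first by rewrite subnn.
by rewrite onth_default //=; lia.
Qed.

Lemma onth_prefix s (t : seq T) k x :
  prefix s t -> onth s k = Some x -> onth t k = Some x.
Proof. by move=> /prefixP [t' ->] Hk; rewrite onth_cat (onth_lt Hk). Qed.

Lemma onth_filter_inj (X : eqType) (U : eqType) (P : pred X) (f : X -> U) (s : seq X) k k' x x' :
  uniq (map f (filter P s)) -> onth s k = Some x -> onth s k' = Some x' ->
  P x -> P x' -> f x = f x' -> k = k'.
Proof.
elim: s k k' => [|a s IH] [|k] [|k'] //= Hu.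
- move=> [<-] Hk' Px Px' Ef; move: Hu; rewrite Px /= => /andP [/negP []].
  by rewrite Ef map_f // mem_filter Px'; apply/onthP; exists k'.
- move=> Hk [<-] Px Px' Ef; move: Hu; rewrite Px' /= => /andP [/negP []].
  by rewrite -Ef map_f // mem_filter Px; apply/onthP; exists k.
- move=> Hk Hk' Px Px' Ef; congr S; apply: IH Hk Hk' Px Px' Ef.
  by move: Hu; case: (P a) => //= /andP [].
Qed.

End SeqFacts.

Section Slp.
Variable A : eqType.
Implicit Type S : slp A.

Definition rule_body (r : rule A) (acc : seq (seq A)) :=
  match r with Term a => [:: a] | Pair l r => nth [::] acc l ++ nth [::] acc r end.

Lemma derivs_aux_cat (rs : seq (rule A)) acc :
  exists ext, derivs_aux acc rs = acc ++ ext /\ size ext = size rs.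
Proof.
elim: rs acc => [|r rs IH] acc /=; first by exists [::]; rewrite cats0.
have [ext [-> Hs]] := IH (rcons acc (rule_body r acc)).
by exists (rule_body r acc :: ext); rewrite -cats1 -catA /= Hs.
Qed.

Lemma nth_derivs_aux (rs : seq (rule A)) acc k r : onth rs k = Some r ->
  nth [::] (derivs_aux acc rs) (size acc + k) =
  rule_body r (take (size acc + k) (derivs_aux acc rs)).
Proof.
elim: rs acc k => [|r0 rs IH] acc [|k] //= Hk.
- case: Hk => <-; have [ext [-> _]] := derivs_aux_cat rs (rcons acc (rule_body r0 acc)).
  by rewrite addn0 -cats1 -catA nth_cat ltnn subnn take_size_cat.
- by have := IH (rcons acc (rule_body r0 acc)) k Hk; rewrite size_rcons addSnnS.
Qed.

Lemma tstr_term S i a : onth S i = Some (Term a) -> tstr S i = [:: a].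
Proof. by move=> H; have := nth_derivs_aux [::] H; rewrite /tstr /= => ->. Qed.

Lemma tstr_pair S i l r : slp_wf S -> onth S i = Some (Pair A l r) ->
  tstr S i = tstr S l ++ tstr S r.
Proof.
move=> [_ Hwf] H; have [Hl Hr] := Hwf _ _ _ H.
by have := nth_derivs_aux [::] H; rewrite /tstr /= => ->; rewrite !nth_take.
Qed.

Definition counts_infix S (cnt : seq nat) :=
  forall i, 0 < nth 0 cnt i -> infix (tstr S i) (slp_text S).

Lemma counts_infix_incr S cnt x m : counts_infix S cnt ->
  (0 < m -> infix (tstr S x) (slp_text S)) ->
  counts_infix S (set_nth 0 cnt x (nth 0 cnt x + m)).
Proof.
move=> Hcnt Hm i; rewrite nth_set_nth /=; case: eqP => [->|_]; last exact: Hcnt.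
by case: (posnP m) => [->|/Hm]; rewrite ?addn0 //; apply: Hcnt.
Qed.

(* Counts are only pushed from a rule to its two children, starting at the root. *)
Lemma occ_infix S i : slp_wf S -> 0 < occ S i -> infix (tstr S i) (slp_text S).
Proof.
move=> Hwf; rewrite /occ /occs.
have : counts_infix S (set_nth 0 (nseq (size S) 0) (size S).-1 1).
  move=> j; rewrite nth_set_nth /= nth_nseq if_same.
  by case: eqP => [-> _|]; first exact: infix_refl.
elim: (rev (iota 0 (size S))) (set_nth _ _ _ _) => [|j js IH] cnt Hcnt; first exact: Hcnt.
apply: IH; rewrite /occ_step; case Hj: (onth S j) => [[a|l r]|] //.
have Hsub x : infix (tstr S x) (tstr S j) -> 0 < nth 0 cnt j -> infix (tstr S x) (slp_text S).
  by move=> Hx /Hcnt; apply: infix_trans.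
rewrite (tstr_pair Hwf Hj) in Hsub.
apply: counts_infix_incr; first apply: counts_infix_incr => //.
- exact: Hsub (prefix_infix _ _).
- exact: Hsub (suffix_infix _ _).
Qed.

Variable q : nat.
Hypothesis q2 : 2 <= q.

Lemma window_rel_sub S i l r p : onth S i = Some (Pair A l r) ->
  p < size (tstr S l) < p + q -> p + q <= size (tstr S i) ->
  exists o, o + q <= size (rel_sub q S i) /\
            take q (drop o (rel_sub q S i)) = take q (drop p (tstr S i)).
Proof.
rewrite /rel_sub => -> /andP [H1 H2]; rewrite /substr.
move: (tstr S i) (size (tstr S l)) H1 H2 => s L H1 H2 H3.
have [x0 _] : exists x0 : A, True by case: s H3 => [|x ?] /= H3; [lia|exists x].
exists (p - (L.+1 - q)).
have Hw : p - (L.+1 - q) + q <=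
    size (take (minn (L + q - 2) (size s).-1 - (L.+1 - q)).+1 (drop (L.+1 - q) s)).
  by rewrite size_take_min size_drop; lia.
split=> //; apply: (@eq_from_nth _ x0) => [|k]; first by rewrite !size_takel ?size_drop; lia.
rewrite size_takel ?size_drop => [Hk|]; last lia.
by rewrite !nth_window //; [congr nth; lia|lia].
Qed.

(* A q-window of t_X lies inside one child of X, or straddles the boundary and is then
   caught by the relevant substring r_X. *)
Lemma window_in_rel_sub S : slp_wf S -> forall i, i < size S ->
  forall p, p + q <= size (tstr S i) ->
  exists i' o, [/\ i' < size S, (exists l r, onth S i' = Some (Pair A l r)),
     q <= size (tstr S i'), o + q <= size (rel_sub q S i') &
     take q (drop o (rel_sub q S i')) = take q (drop p (tstr S i))].
Proof.
move=> Hwf; elim/ltn_ind=> i IH Hi p Hp.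
case Hr: (onth S i) => [[a|l r]|]; last by move: (onthNE S i); rewrite Hr leqNgt Hi.
  by move: Hp; rewrite (tstr_term Hr) /=; lia.
have [Hl Hr'] := Hwf.2 _ _ _ Hr; have Ht := tstr_pair Hwf Hr.
case: (leqP (p + q) (size (tstr S l))) => Hc1.
  have [i' [o [? ? ? ? E]]] := IH l Hl (ltn_trans Hl Hi) p Hc1.
  exists i', o; split => //; rewrite E Ht drop_cat ifT; last lia.
  by rewrite takel_cat // size_drop; lia.
case: (leqP (size (tstr S l)) p) => Hc2.
  have Hp' : p - size (tstr S l) + q <= size (tstr S r) by move: Hp; rewrite Ht size_cat; lia.
  have [i' [o [? ? ? ? E]]] := IH r Hr' (ltn_trans Hr' Hi) _ Hp'.
  by exists i', o; split => //; rewrite E Ht drop_cat ltnNge Hc2.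
have [o [Ho E]] := @window_rel_sub S i l r p Hr (introT andP (conj Hc2 Hc1)) Hp.
by exists i, o; split => //; [exists l, r|lia].
Qed.

End Slp.

Section QgramRcons.
Variable T : eqType.
Implicit Types (w k : seq T) (c : T).

Lemma qgram_rcons_take n w k c : size k = n -> infix (rcons k c) w -> is_qgram n w k.
Proof.
by move=> Hk Hw; apply/qgramP; split=> //; apply: infix_trans _ Hw; rewrite -cats1 prefix_infix.
Qed.

Lemma qgram_rcons_behead n w k c : size k = n -> infix (rcons k c) w ->
  is_qgram n w (behead (rcons k c)).
Proof.
move=> Hk Hw; apply/qgramP; split; first by rewrite size_behead size_rcons Hk.
by apply: infix_trans _ Hw; rewrite -drop1; exact: infix_drop.
Qed.

Lemma behead_rcons_inj k k' c c' : size k = size k' -> 0 < size k ->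
  behead (rcons k c) = behead (rcons k' c') -> c = c'.
Proof. by case: k k' => [|x k] [|x' k'] //= _ _ /(congr1 (last c)); rewrite !last_rcons. Qed.

Lemma rcons_take_nth x0 n w : size w = n.+1 -> rcons (take n w) (nth x0 w n) = w.
Proof. by move=> Hw; rewrite -take_nth ?Hw // take_oversize ?Hw. Qed.

End QgramRcons.

Section EdgeEqType.
Variables A F : eqType.
Definition edge_tuple (e : edge A F) := (esrc e, elab e, edst e, ecnt e).
Definition tuple_edge (t : F * A * F * nat) := let: (x, c, y, m) := t in Edge x c y m.
Lemma edge_tupleK : cancel edge_tuple tuple_edge. Proof. by case. Qed.
HB.instance Definition _ := Equality.copy (edge A F) (can_type edge_tupleK).
End EdgeEqType.

Section TentryEqType.
Variables A F : eqType.
Definition tentry_tuple (e : tentry A F) := (tpar e, tlab e, tcnt e, tfp e).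
Definition tuple_tentry (t : nat * A * option nat * option F) :=
  let: (p, c, m, y) := t in TEntry p c m y.
Lemma tentry_tupleK : cancel tentry_tuple tuple_tentry. Proof. by case. Qed.
HB.instance Definition _ := Equality.copy (tentry A F) (can_type tentry_tupleK).
End TentryEqType.

Lemma foldl_inv (G : Type) (X : eqType) (P : G -> Prop) (f : G -> X -> G) xs g0 :
  (forall g x, x \in xs -> P g -> P (f g x)) -> P g0 -> P (foldl f g0 xs).
Proof.
elim: xs g0 => //= a xs IH g0 Hf Hg; apply: IH => [g x Hx|]; apply: Hf => //.
  by rewrite inE Hx orbT.
exact: mem_head.
Qed.

Lemma foldl_stable_mem (G : Type) (X : eqType) (P : G -> Prop) (f : G -> X -> G) xs g0 x0 :
  (forall g x, P g -> P (f g x)) -> (forall g, P (f g x0)) -> x0 \in xs -> P (foldl f g0 xs).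
Proof.
move=> Hst Hx0; elim: xs g0 => //= a xs IH g0; rewrite inE => /orP [/eqP <-|]; last exact: IH.
by apply: foldl_inv => // g x _; apply: Hst.
Qed.

Section Windows.
Variable A : eqType.
Implicit Type r : seq A.

Lemma behead_window r o n : behead (take n.+1 (drop o r)) = take n (drop o.+1 r).
Proof. by elim: r o => [|x r IH] [|o] //=; rewrite drop0. Qed.

Lemma rcons_window r o n c : onth r (o + n) = Some c ->
  rcons (take n (drop o r)) c = take n.+1 (drop o r).
Proof.
move=> Hc; have Hlt := onth_lt Hc.
rewrite (take_nth c); last by rewrite size_drop; lia.
by rewrite nth_drop (onth_nth c c _ _ Hc).
Qed.

Lemma substr_window r i n : substr r i (i + n) = take n.+1 (drop i r).
Proof. by rewrite /substr addKn. Qed.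

End Windows.

Section Graph.
Variables (A F : eqType) (q : nat) (phi : seq A -> F) (T : seq A).
Hypothesis q2 : 2 <= q.
Implicit Types (g : graph A F) (x y : F) (c : A) (m : nat) (r : seq A).

Definition has_edge g x y := has (fun e => (esrc e == x) && (edst e == y)) (gedges g).
Definition edge_ends (e : edge A F) := (esrc e, edst e).

Definition qgram_edge x c y :=
  exists k, [/\ size k = q - 1, infix (rcons k c) T, x = phi k & y = phi (behead (rcons k c))].

Definition graph_inv g :=
  (forall e, e \in gedges g -> edst e \in gnodes g /\ qgram_edge (esrc e) (elab e) (edst e)) /\
  uniq (map edge_ends (gedges g)).

Lemma gedges_add_node g x : gedges (add_node g x) = gedges g.
Proof. by rewrite /add_node; case: ifP. Qed.

Lemma mem_add_node g x : x \in gnodes (add_node g x).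
Proof. by rewrite /add_node; case: ifP => //= _; rewrite mem_rcons mem_head. Qed.

Lemma sub_add_node g x : {subset gnodes g <= gnodes (add_node g x)}.
Proof. by rewrite /add_node; case: ifP => _ z Hz //; rewrite /= mem_rcons inE Hz orbT. Qed.

Lemma has_edge_add_node g x x' y' : has_edge g x' y' -> has_edge (add_node g x) x' y'.
Proof. by rewrite /has_edge gedges_add_node. Qed.

Lemma has_edge_add_edge g x c y m x' y' :
  has_edge g x' y' || (x' == x) && (y' == y) -> has_edge (add_edge g x c y m) x' y'.
Proof.
rewrite /add_edge /has_edge; case: ifP => Hh /=; last first.
  by rewrite has_rcons /= => /orP [->|/andP [/eqP -> /eqP ->]]; rewrite ?eqxx ?orbT.
have incr e : e \in gedges g -> esrc e = x' -> edst e = y' ->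
    has (fun e => (esrc e == x') && (edst e == y'))
      [seq (if (esrc e0 == x) && (edst e0 == y)
            then Edge (esrc e0) (elab e0) (edst e0) (ecnt e0 + m) else e0) | e0 <- gedges g].
  move=> He E1 E2; apply/hasP; exists (if (esrc e == x) && (edst e == y)
    then Edge (esrc e) (elab e) (edst e) (ecnt e + m) else e); first exact: map_f.
  by case: ifP; rewrite /= E1 E2 !eqxx.
case/orP => [/hasP [e He /andP [/eqP E1 /eqP E2]]|/andP [/eqP Ex /eqP Ey]].
  exact: incr He E1 E2.
subst x' y'.
by move/hasP: Hh => [e He /andP [/eqP E1 /eqP E2]]; exact: incr He E1 E2.
Qed.

Lemma graph_inv_add_node g x : graph_inv g -> graph_inv (add_node g x).
Proof.
move=> [Hok Hu]; rewrite /graph_inv gedges_add_node; split=> // e /Hok [Hy He].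
by split=> //; exact: sub_add_node.
Qed.

Lemma graph_inv_add_edge g x c y m :
  graph_inv g -> y \in gnodes g -> qgram_edge x c y -> graph_inv (add_edge g x c y m).
Proof.
move=> [Hok Hu] Hy Hxy; rewrite /graph_inv /add_edge; case: ifP => Hh /=; split.
- by move=> e /mapP [e0 /Hok He0 ->]; case: ifP.
- by rewrite -map_comp (@eq_map _ _ _ edge_ends) // => e0 /=; case: ifP.
- by move=> e; rewrite mem_rcons inE => /orP [/eqP ->|/Hok].
- rewrite map_rcons rcons_uniq Hu andbT; apply/mapP => [[e0 He0 [E1 E2]]].
  by move/negbT/hasPn: Hh => /(_ _ He0); rewrite -E1 -E2 !eqxx.
Qed.

Lemma insert_step_window r j : 0 < j -> j + q - 2 < size r ->
  substr r j.-1 (j + q - 3) = take (q - 1) (drop j.-1 r) /\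
  substr r j (j + q - 2) = take (q - 1) (drop j r).
Proof.
move=> Hj _; have -> : j + q - 3 = j.-1 + (q - 2) by lia.
have -> : j + q - 2 = j + (q - 2) by lia.
by rewrite !substr_window; have -> : (q - 2).+1 = q - 1 by lia.
Qed.

Lemma graph_inv_insert_step g m r j : graph_inv g -> infix r T -> 0 < j ->
  graph_inv (insert_step phi q m r g j).
Proof.
move=> Hg Hr Hj; rewrite /insert_step.
case Hc: (onth r (j + q - 2)) => [c|]; last exact: graph_inv_add_node.
have [-> ->] := insert_step_window Hj (onth_lt Hc).
apply: graph_inv_add_edge; [exact: graph_inv_add_node|exact: mem_add_node|].
have Hc' : onth r (j.-1 + (q - 1)) = Some c by rewrite -Hc; congr onth; lia.
exists (take (q - 1) (drop j.-1 r)); split.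
- by rewrite size_takel // size_drop; have := onth_lt Hc; lia.
- rewrite (rcons_window Hc'); exact: infix_trans (infix_take _ _) (infix_trans (infix_drop _ _) Hr).
- by [].
- by rewrite (rcons_window Hc') behead_window; have -> : j.-1.+1 = j by lia.
Qed.

Lemma has_edge_insert_step g m r j x y :
  has_edge g x y -> has_edge (insert_step phi q m r g j) x y.
Proof.
move=> H; rewrite /insert_step; case: (onth r _) => [c|]; last exact: has_edge_add_node.
by apply: has_edge_add_edge; rewrite has_edge_add_node.
Qed.

Lemma has_edge_insert_step_window g m r o :
  o + q <= size r ->
  has_edge (insert_step phi q m r g o.+1)
    (phi (take (q - 1) (drop o r))) (phi (take (q - 1) (drop o.+1 r))).
Proof.
move=> Ho; rewrite /insert_step.
case Hc: (onth r (o.+1 + q - 2)) => [c|].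
  have [E1 E2] := insert_step_window (ltn0Sn o) (onth_lt Hc).
  by apply: has_edge_add_edge; rewrite E1 E2 !eqxx orbT.
by move: (onthNE r (o.+1 + q - 2)); rewrite Hc /=; lia.
Qed.

End Graph.

Section Build.
Variables (A F : eqType) (q : nat) (phi : seq A -> F) (S : slp A) (ord : seq nat).
Hypothesis q2 : 2 <= q.
Hypothesis Hwf : slp_wf S.
Hypothesis Hocc : forall i, i < size S -> 0 < occ S i.
Local Notation T := (slp_text S).

Lemma graph_inv_insert_rule g i :
  graph_inv q phi T g -> graph_inv q phi T (insert_rule phi q S g i).
Proof.
rewrite /insert_rule; case Hi: (onth S i) => [[a|l r]|] // Hg; case: ifP => // _.
apply: foldl_inv => [g' j|]; last exact: graph_inv_add_node.
rewrite mem_iota => /andP [Hj _] Hg'; apply: (graph_inv_insert_step q2) => //.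
apply: infix_trans (occ_infix Hwf (Hocc (onth_lt Hi))).
by rewrite /rel_sub Hi /substr; exact: infix_trans (infix_take _ _) (infix_drop _ _).
Qed.

Lemma graph_inv_build : graph_inv q phi T (build_graph phi q S ord).
Proof. by apply: foldl_inv => [g i _|]; [exact: graph_inv_insert_rule|split]. Qed.

Lemma has_edge_insert_rule g i x y : has_edge g x y -> has_edge (insert_rule phi q S g i) x y.
Proof.
move=> H; rewrite /insert_rule; case: (onth S i) => [[a|l r]|] //; case: ifP => // _.
apply: (foldl_inv (P := fun g => has_edge g x y)); last exact: has_edge_add_node.
by move=> g' j _; exact: has_edge_insert_step.
Qed.

Hypothesis Hperm : perm_eq ord (iota 0 (size S)).

Lemma has_edge_build s : is_qgram q T s ->
  has_edge (build_graph phi q S ord) (phi (take (q - 1) s)) (phi (behead s)).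
Proof.
move=> [p [Hp ->]].
have Hn : (size S).-1 < size S by case: Hwf => H0 _; lia.
have [i [o [Hi [l [r Hr]] Hq Ho <-]]] := window_in_rel_sub q2 Hwf Hn Hp.
have -> : take q (drop o (rel_sub q S i)) = take (q - 1).+1 (drop o (rel_sub q S i)).
  by congr take; lia.
rewrite take_takel // behead_window.
apply: (@foldl_stable_mem _ _ (fun g => has_edge g _ _) _ _ _ i).
- by move=> g j; exact: has_edge_insert_rule.
- move=> g; rewrite /insert_rule Hr Hq.
  apply: (@foldl_stable_mem _ _ (fun g => has_edge g _ _) _ _ _ o.+1); last by rewrite mem_iota; lia.
    by move=> g' j; exact: has_edge_insert_step.
  by move=> g'; exact: has_edge_insert_step_window.
- by rewrite (perm_mem Hperm) mem_iota.
Qed.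

End Build.

Definition entry_key {A F : eqType} (e : tentry A F) := (tlab e, tcnt e, tfp e).
Definition edge_key {A F : eqType} (t : A * F * nat) := (t.1.1, Some t.2, Some t.1.2).

Section DFS.
Variables (A F : eqType) (E : F -> seq (A * F * nat)) (V : seq F) (base : nat).
Hypothesis EV : forall x c y m, (c, y, m) \in E x -> y \in V.
Implicit Types (tr : ctree A F) (vis : seq F) (exp : seq (F * nat)).

Definition children tr p := [seq entry_key e | e <- tr & tpar e == p].

(* [exp] pairs every visited graph node y with its tree node tau(y); tree node v > 0 is
   described by the entry [v.-1] of [tr].  The first [base] entries form the initial path. *)
Record dfs_inv tr vis exp : Prop := DfsInv {
  dfs_visited : map fst exp = vis;
  dfs_uniq : uniq vis;
  dfs_sub : {subset vis <= V};
  dfs_node : forall y v, (y, v) \in exp ->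
    0 < v /\ exists e, onth tr v.-1 = Some e /\ tfp e = Some y;
  dfs_par : forall k e, onth tr k = Some e -> tpar e <= k;
  dfs_entry : forall k e, onth tr k = Some e -> base <= k -> exists x y m,
    [/\ (x, tpar e) \in exp, (tlab e, y, m) \in E x, tfp e = Some y & y \in vis] }.

Definition explore_step fuel tx (st : ctree A F * seq F) (e : A * F * nat) :=
  let: (c, y, m) := e in let: (tr, vis) := st in
  if y \in vis then (rcons tr (TEntry tx c (Some m) (Some y)), vis)
  else explore E fuel y (size tr).+1 (rcons tr (TEntry tx c (Some m) (Some y)), rcons vis y).

Arguments explore_step : simpl never.

Lemma exploreS fuel x tx st : explore E fuel.+1 x tx st = foldl (explore_step fuel tx) st (E x).
Proof. by []. Qed.

Lemma children_rcons tr e p :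
  children (rcons tr e) p =
  if tpar e == p then rcons (children tr p) (entry_key e) else children tr p.
Proof. by rewrite /children filter_rcons; case: ifP; rewrite ?map_rcons. Qed.

Lemma children_nil tr p : (forall k e, onth tr k = Some e -> tpar e <= k) -> size tr <= p ->
  children tr p = [::].
Proof.
move=> Hpar Hp; apply/nilP; rewrite /nilp size_map size_filter -leqn0 leqNgt -has_count.
apply/hasPn => e /onthP [k Hk]; apply/negP => /eqP Ep.
by have := leq_trans (leq_ltn_trans (Hpar _ _ Hk) (onth_lt Hk)) Hp; rewrite Ep ltnn.
Qed.

Lemma dfs_inv_size tr vis exp : dfs_inv tr vis exp -> size vis <= size V.
Proof. by case=> _ Hu Hs _ _ _; exact: uniq_leq_size. Qed.

Lemma dfs_inv_tree_node tr vis exp x tx :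
  dfs_inv tr vis exp -> (x, tx) \in exp -> 0 < tx <= size tr.
Proof. by move=> HI /(dfs_node HI) [? [e [He _]]]; have := onth_lt He; lia. Qed.

Lemma dfs_inv_leaf tr vis exp x tx c y m : dfs_inv tr vis exp -> (x, tx) \in exp ->
  (c, y, m) \in E x -> y \in vis -> dfs_inv (rcons tr (TEntry tx c (Some m) (Some y))) vis exp.
Proof.
move=> HI Hx He Hy; have Htx := dfs_inv_tree_node HI Hx.
case: HI => Hv Hu Hs Hn Hp Hen; split=> //.
- move=> y' v /Hn [Hv0 [e [Ee Hfe]]]; split=> //; exists e.
  by rewrite (onth_prefix (prefix_rcons _ _) Ee).
- move=> k e; rewrite onth_rcons; case: ltnP => Hk; first exact: Hp.
  by case: eqP => // -> [<-] /=; lia.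
- move=> k e; rewrite onth_rcons; case: ltnP => Hk; first exact: Hen.
  by case: eqP => // -> [<-] _; exists x, y, m.
Qed.

Lemma dfs_inv_new tr vis exp x tx c y m : dfs_inv tr vis exp -> (x, tx) \in exp ->
  (c, y, m) \in E x -> y \notin vis ->
  dfs_inv (rcons tr (TEntry tx c (Some m) (Some y))) (rcons vis y) (rcons exp (y, (size tr).+1)).
Proof.
move=> HI Hx He Hy; have Htx := dfs_inv_tree_node HI Hx.
case: HI => Hv Hu Hs Hn Hp Hen; split.
- by rewrite map_rcons Hv.
- by rewrite rcons_uniq Hy.
- by move=> z; rewrite mem_rcons inE => /orP [/eqP ->|/Hs]; [exact: EV He|].
- move=> y' v; rewrite mem_rcons inE => /orP [/eqP [-> ->]|/Hn [Hv0 [e [Ee Hfe]]]].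
    by split=> //; eexists; rewrite onth_rcons ltnn eqxx.
  by split=> //; exists e; rewrite (onth_prefix (prefix_rcons _ _) Ee).
- move=> k e; rewrite onth_rcons; case: ltnP => Hk; first exact: Hp.
  by case: eqP => // -> [<-] /=; lia.
- move=> k e; rewrite onth_rcons; case: ltnP => Hk.
    move=> /Hen H /H [x' [y' [m' [Hx' He' Hf Hy']]]].
    by exists x', y', m'; split => //; rewrite mem_rcons inE ?Hx' ?Hy' orbT.
  case: eqP => // -> [<-] _; exists x, y, m.
  by split => //; rewrite mem_rcons inE ?Hx ?eqxx ?orbT.
Qed.

Definition explore_post tr tx ch exp (res : ctree A F * seq F) :=
  exists exp', [/\ dfs_inv res.1 res.2 (exp ++ exp'), prefix tr res.1,
    children res.1 tx = ch,
    (forall y v, (y, v) \in exp' -> children res.1 v = map edge_key (E y) /\ size tr < v) &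
    (forall v, v != tx -> v <= size tr -> children res.1 v = children tr v)].

Lemma explore_post_refl tr vis exp tx : dfs_inv tr vis exp ->
  explore_post tr tx (children tr tx) exp (tr, vis).
Proof. by exists [::]; rewrite cats0; split=> //; exact: prefix_refl. Qed.

Lemma explore_post_trans tr tx ch exp st ch' st' : tx <= size tr ->
  explore_post tr tx ch exp st ->
  (forall exp', dfs_inv st.1 st.2 (exp ++ exp') -> children st.1 tx = ch ->
     explore_post st.1 tx ch' (exp ++ exp') st') ->
  explore_post tr tx ch' exp st'.
Proof.
move=> Htx [exp1 [HI1 Hpre1 Hch1 Hnew1 Hfr1]] /(_ _ HI1 Hch1) [exp2 [HI2 Hpre2 Hch2 Hnew2 Hfr2]].
have Hsz : size tr <= size st.1 := size_prefix Hpre1.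
exists (exp1 ++ exp2); rewrite catA; split=> //; first exact: prefix_trans Hpre2.
- move=> y v; rewrite mem_cat => /orP [Hv|/Hnew2 [? ?]]; last by split=> //; lia.
  have [Hch Hv'] := Hnew1 _ _ Hv.
  have Hv1 : (y, v) \in exp ++ exp1 by rewrite mem_cat Hv orbT.
  have [_ [e [Ee _]]] := dfs_node HI1 Hv1.
  have Hvs : v <= size st.1 by have := onth_lt Ee; lia.
  by rewrite Hfr2 //; apply/eqP; lia.
- by move=> v Hv Hvs; rewrite Hfr2 ?Hfr1 //; lia.
Qed.

Lemma explore_step_leaf fuel tr vis exp x tx c y m : dfs_inv tr vis exp -> (x, tx) \in exp ->
  (c, y, m) \in E x -> y \in vis ->
  explore_post tr tx (rcons (children tr tx) (edge_key (c, y, m))) exp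
    (explore_step fuel tx (tr, vis) (c, y, m)).
Proof.
move=> HI Hx He Hy; rewrite /explore_step Hy.
exists [::]; rewrite cats0; split=> //.
- exact: dfs_inv_leaf HI Hx He Hy.
- exact: prefix_rcons.
- by rewrite children_rcons eqxx.
- by move=> v Hv _; rewrite children_rcons /= eq_sym (negbTE Hv).
Qed.

(* Each nested call visits a new node of V, so this much fuel never runs out. *)
Definition explore_ok fuel := forall x tx tr vis exp,
  dfs_inv tr vis exp -> (x, tx) \in exp -> children tr tx = [::] -> size V < fuel + size vis ->
  explore_post tr tx (map edge_key (E x)) exp (explore E fuel x tx (tr, vis)).

Lemma explore_step_new fuel tr vis exp x tx c y m : explore_ok fuel ->
  dfs_inv tr vis exp -> (x, tx) \in exp -> (c, y, m) \in E x -> y \notin vis ->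
  size V < fuel.+1 + size vis ->
  explore_post tr tx (rcons (children tr tx) (edge_key (c, y, m))) exp
    (explore_step fuel tx (tr, vis) (c, y, m)).
Proof.
move=> IH HI Hx He Hy Hf; rewrite /explore_step (negbTE Hy).
have HI1 := dfs_inv_new HI Hx He Hy; have Htx := dfs_inv_tree_node HI Hx.
set tr1 := rcons tr _ in HI1 *; have Hsz1 : size tr1 = (size tr).+1 by rewrite size_rcons.
have Hw : (y, (size tr).+1) \in rcons exp (y, (size tr).+1) by rewrite mem_rcons mem_head.
have Hc1 : children tr1 (size tr).+1 = [::].
  by apply: children_nil; [exact: dfs_par HI1|rewrite Hsz1].
have [|exp2 [HI2 Hpre2 Hch2 Hnew2 Hfr2]] := IH y (size tr).+1 tr1 _ _ HI1 Hw Hc1.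
  by rewrite size_rcons; lia.
exists ((y, (size tr).+1) :: exp2); split.
- by rewrite -cat1s catA cats1.
- exact: prefix_trans (prefix_rcons _ _) Hpre2.
- by rewrite Hfr2 ?children_rcons ?eqxx //; [apply/eqP|]; lia.
- by move=> y' v; rewrite inE => /orP [/eqP [-> ->]|/Hnew2 [? ?]]; split=> //; lia.
- move=> v Hv Hvs; rewrite Hfr2; [|by rewrite neq_ltn ltnS Hvs|lia].
  by rewrite children_rcons /= eq_sym (negbTE Hv).
Qed.

Lemma explore_fold fuel x tx es tr vis exp : explore_ok fuel -> {subset es <= E x} ->
  dfs_inv tr vis exp -> (x, tx) \in exp -> size V < fuel.+1 + size vis ->
  explore_post tr tx (children tr tx ++ map edge_key es) exp
    (foldl (explore_step fuel tx) (tr, vis) es).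
Proof.
move=> IH; elim: es tr vis exp => [|[[c y] m] es IHes] tr vis exp Hes HI Hx Hf /=.
  by rewrite cats0; exact: explore_post_refl HI.
have He : (c, y, m) \in E x by apply: Hes; exact: mem_head.
have : explore_post tr tx (rcons (children tr tx) (edge_key (c, y, m))) exp
    (explore_step fuel tx (tr, vis) (c, y, m)).
  case: (boolP (y \in vis)) => Hy; first exact: explore_step_leaf HI Hx He Hy.
  exact: explore_step_new IH HI Hx He Hy Hf.
case: (explore_step _ _ _ _) => tr' vis' Hstep.
have Htx := dfs_inv_tree_node HI Hx.
apply: explore_post_trans Hstep _ => [|exp' HI' Hch]; first lia.
rewrite -cat_rcons -Hch; apply: IHes => //.
- by move=> z Hz; apply: Hes; rewrite inE Hz orbT.
- by rewrite mem_cat Hx.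
- have := congr1 size (dfs_visited HI'); have := congr1 size (dfs_visited HI).
  by rewrite !size_map size_cat /=; lia.
Qed.

Lemma exploreP fuel : explore_ok fuel.
Proof.
elim: fuel => [|fuel IH] x tx tr vis exp HI Hx Hc Hf; first by have := dfs_inv_size HI; lia.
by rewrite exploreS; have := explore_fold IH (fun z Hz => Hz) HI Hx Hf; rewrite Hc.
Qed.

End DFS.

Section TreePaths.
Variables (A F : eqType) (C : ctree A F).
Hypothesis Cpar : forall k e, onth C k = Some e -> tpar e <= k.

Definition tparent v := if v is v'.+1 then (if onth C v' is Some e then tpar e else 0) else 0.

Fixpoint upath v k := if k is k'.+1 then rcons (upath (tparent v) k') v else [::].

Definition in_tree v := 0 < v <= size C.

Lemma tparent_le v : tparent v <= v.
Proof. by case: v => //= v; case E: (onth C v) => [e|] //; have := Cpar E; lia. Qed.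

Lemma iter_tparent_le v k : iter k tparent v <= v.
Proof. by elim: k => //= k IH; exact: leq_trans (tparent_le _) IH. Qed.

Lemma tparent_entry v e : 0 < v -> onth C v.-1 = Some e -> tparent v = tpar e.
Proof. by case: v => // v _ /= ->. Qed.

Lemma in_tree_entry v : in_tree v -> exists e, onth C v.-1 = Some e.
Proof.
move=> /andP [H0 Hs]; case E: (onth C v.-1) => [e|]; first by exists e.
by move: (onthNE C v.-1); rewrite E /=; lia.
Qed.

Lemma size_upath v k : size (upath v k) = k.
Proof. by elim: k v => //= k IH v; rewrite size_rcons IH. Qed.

Lemma upathSl v k : upath v k.+1 = iter k tparent v :: upath v k.
Proof. by elim: k v => //= k IH v; rewrite IH -iterSr. Qed.

Lemma upath_rcons v n : 0 < n -> upath v n = rcons (upath (tparent v) (n - 1)) v.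
Proof. by case: n => // n _; rewrite subn1. Qed.

Lemma tchild_parent u w :
  tchild C u w -> [/\ tparent w = u, 0 < w & exists e, onth C w.-1 = Some e].
Proof.
rewrite /tchild; case E: (onth C w.-1) => [e|] // /andP [Hw /eqP He].
by split=> //; [rewrite (tparent_entry Hw E)|exists e].
Qed.

Lemma path_upath v0 vs : path (tchild C) v0 vs ->
  vs = upath (last v0 vs) (size vs) /\ v0 = iter (size vs) tparent (last v0 vs).
Proof.
elim/last_ind: vs => [|vs w IH] //=; rewrite rcons_path last_rcons size_rcons => /andP [Hp Ht].
have [Hpw _ _] := tchild_parent Ht; have [E1 E2] := IH Hp.
by rewrite iterSr Hpw -E2 /= Hpw -E1.
Qed.

Lemma upath_path v k : (forall j, j < k -> in_tree (iter j tparent v)) ->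
  path (tchild C) (iter k tparent v) (upath v k).
Proof.
elim: k v => //= k IH v Hv; rewrite -iterS iterSr rcons_path; apply/andP; split.
  by apply: IH => j Hj; rewrite -iterSr; exact: Hv.
have -> : last (iter k tparent (tparent v)) (upath (tparent v) k) = tparent v.
  by case: k {IH Hv} => //= k; rewrite last_rcons.
have /andP [Hv0 _] := Hv 0 (ltn0Sn _); have [e Ee] := in_tree_entry (Hv 0 (ltn0Sn _)).
by rewrite /tchild Ee Hv0 (tparent_entry Hv0 Ee) eqxx.
Qed.

Lemma tspell_rcons vs v e : onth C v.-1 = Some e ->
  tspell C (rcons vs v) = rcons (tspell C vs) (tlab e).
Proof. by move=> H; rewrite /tspell -!cats1 pmap_cat /= H. Qed.

Lemma tspell_cons vs v e : onth C v.-1 = Some e -> tspell C (v :: vs) = tlab e :: tspell C vs.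
Proof. by move=> H; rewrite /tspell /= H. Qed.

Lemma tspell_upath_parent v e n : 0 < n -> onth C v.-1 = Some e ->
  in_tree (iter (n - 1) tparent (tparent v)) ->
  tspell C (upath v n) = behead (rcons (tspell C (upath (tparent v) n)) (tlab e)).
Proof.
case: n => // n _ Hv; rewrite subn1 => /in_tree_entry [e' He'].
by rewrite [in RHS]upathSl (tspell_cons _ He') upath_rcons // subn1 (tspell_rcons _ Hv).
Qed.

End TreePaths.

Section InitTree.
Variables (A F : eqType) (q : nat) (T : seq A) (st : F).
Hypothesis HT : q - 1 <= size T.

Lemma size_init_tree : size (init_tree q T st) = q - 1.
Proof. by rewrite /init_tree size_map size_zip size_iota size_takel // minnn. Qed.

Lemma onth_init_tree k a0 : k < q - 1 -> onth (init_tree q T st) k =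
  Some (TEntry k (nth a0 T k) None (if k.+1 == q.-1 then Some st else None)).
Proof.
move=> Hk; have Hz : k < size (zip (iota 0 (q - 1)) (take (q - 1) T)).
  by rewrite size_zip size_iota size_takel // minnn.
rewrite /init_tree onthE -map_comp (nth_map (0, a0)) //.
by rewrite nth_zip ?size_iota ?size_takel //= nth_iota // nth_take // add0n.
Qed.

End InitTree.

Section Main.
Variables (A F : eqType) (q : nat) (S : slp A) (phi : seq A -> F) (ord : seq nat)
  (ordr : F -> seq (A * F * nat)) (a0 : A).
Hypothesis Hq : 2 <= q.
Hypothesis Hwf : slp_wf S.
Hypothesis Hocc : forall i, i < size S -> 0 < occ S i.
Hypothesis HqT : q <= size (slp_text S).
Hypothesis Hinj : forall u v, is_qgram (q - 1) (slp_text S) u -> is_qgram (q - 1) (slp_text S) v ->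
  (phi u = phi v <-> u = v).
Hypothesis Hperm : perm_eq ord (iota 0 (size S)).
Hypothesis Hordr : forall x, perm_eq (ordr x) (out_edges (build_graph phi q S ord) x).
Local Notation T := (slp_text S).
Local Notation G := (build_graph phi q S ord).
Local Notation st := (phi (take (q - 1) T)).
Local Notation V := (st :: gnodes G).
Local Notation init := (init_tree q T st).
Local Notation C := (cs_tree phi q T G ordr).

Lemma graph_invG : graph_inv q phi T G.
Proof. exact: graph_inv_build. Qed.

Lemma out_edgeP x c y m : (c, y, m) \in ordr x ->
  exists2 e, e \in gedges G & [/\ esrc e = x, elab e = c & edst e = y].
Proof.
rewrite (perm_mem (Hordr x)) => /mapP [e]; rewrite mem_filter => /andP [/eqP Hx He] [-> -> _].
by exists e.
Qed.

Lemma out_edge_qgram x c y m : (c, y, m) \in ordr x -> qgram_edge q phi T x c y.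
Proof. by case/out_edgeP=> e /(graph_invG.1) [_ He] [<- <- <-]. Qed.

Lemma out_edge_node x c y m : (c, y, m) \in ordr x -> y \in V.
Proof. by case/out_edgeP=> e /(graph_invG.1) [Hy _] [_ _ <-]; rewrite inE Hy orbT. Qed.

Lemma qgram_fp_inj u v : is_qgram (q - 1) T u -> is_qgram (q - 1) T v -> phi u = phi v -> u = v.
Proof. by move=> Hu Hv /(Hinj Hu Hv). Qed.

(* The source fixes the (q-1)-gram k by collision freedom, and then the label fixes the
   target phi (behead (k c)). *)
Lemma edge_label_inj e e' : e \in gedges G -> e' \in gedges G ->
  esrc e = esrc e' -> elab e = elab e' -> e = e'.
Proof.
move=> He He' Ex Ec; apply: (uniq_map_inj graph_invG.2 He He').
have [_ [k [Hk Hkc Exk Eyk]]] := graph_invG.1 _ He.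
have [_ [k' [Hk' Hkc' Exk' Eyk']]] := graph_invG.1 _ He'.
have Ekk : k = k'.
  apply: qgram_fp_inj (qgram_rcons_take Hk Hkc) (qgram_rcons_take Hk' Hkc') _.
  by rewrite -Exk -Exk' Ex.
by rewrite /edge_ends Ex Eyk Eyk' Ekk Ec.
Qed.

Lemma uniq_out_labels x : uniq [seq t.1.1 | t <- ordr x].
Proof.
rewrite (perm_uniq (perm_map _ (Hordr x))) /out_edges -map_comp map_inj_in_uniq.
  exact/filter_uniq/(map_uniq graph_invG.2).
move=> e e'; rewrite !mem_filter => /andP [/eqP Hx He] /andP [/eqP Hx' He'] /= Ec.
by apply: edge_label_inj; rewrite ?Hx ?Hx'.
Qed.

Lemma qgram_out_edge s : is_qgram q T s ->
  exists m, (nth a0 s (q - 1), phi (behead s), m) \in ordr (phi (take (q - 1) s)).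
Proof.
move=> Hs; have [Hsz Hsub] := (qgramP _ _ _).1 Hs.
have /hasP [e He /andP [/eqP Hx /eqP Hy]] := has_edge_build phi Hq Hwf Hperm Hs.
have [_ [k [Hk Hkc Ex Ey]]] := graph_invG.1 _ He.
have Es : rcons (take (q - 1) s) (nth a0 s (q - 1)) = s by apply: rcons_take_nth; rewrite Hsz; lia.
have Htk : size (take (q - 1) s) = q - 1 by rewrite size_take_min Hsz; lia.
have Etake : k = take (q - 1) s.
  apply: qgram_fp_inj (qgram_rcons_take Hk Hkc) _ _; last by rewrite -Ex.
  by apply/qgramP; split; last exact: infix_trans (infix_take _ _) Hsub.
have Ec : elab e = nth a0 s (q - 1).
  apply: (@behead_rcons_inj _ k (take (q - 1) s)); [by rewrite Hk Htk|by rewrite Hk; lia|].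
  rewrite Es; apply: qgram_fp_inj (qgram_rcons_behead Hk Hkc) _ _; last by rewrite -Ey.
  apply/qgramP; split; first by rewrite size_behead Hsz subn1.
  by rewrite -drop1; exact: infix_trans (infix_drop _ _) Hsub.
exists (ecnt e); rewrite (perm_mem (Hordr _)); apply/mapP; exists e.
  by rewrite mem_filter Hx eqxx.
by rewrite Ec Hy.
Qed.

Lemma cs_tree_dfs : exists X vis, [/\ dfs_inv ordr V (q - 1) C vis X, (st, q - 1) \in X,
  prefix init C & forall y v, (y, v) \in X -> children C v = map edge_key (ordr y)].
Proof.
have HT1 : q - 1 <= size T by lia.
have Hsz0 := size_init_tree st HT1.
have HI0 : dfs_inv ordr V (q - 1) init [:: st] [:: (st, q - 1)].
  split=> //.
  - by move=> z; rewrite inE => /eqP ->; exact: mem_head.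
  - move=> y v; rewrite inE => /eqP [-> ->]; split; first lia.
    eexists; split; first by apply: (onth_init_tree _ HT1 a0); lia.
    by have -> : (q - 1).-1.+1 == q.-1 by apply/eqP; lia.
  - move=> k e Hk; have := onth_lt Hk; rewrite Hsz0 => Hk'.
    by move: Hk; rewrite (onth_init_tree _ HT1 a0 Hk') => [[<-]].
  - by move=> k e Hk Hb; exfalso; move: (onth_lt Hk); rewrite Hsz0; lia.
have Hc0 : children init (q - 1) = [::] by apply: children_nil; [case: HI0|rewrite Hsz0].
have Hf0 : size V < (size (gnodes G)).+1 + size [:: st] by rewrite /= addn1.
have [exp' [HI Hpre Hch Hnew _]] := exploreP out_edge_node HI0 (mem_head _ _) Hc0 Hf0.
exists ((st, q - 1) :: exp'), (explore ordr (size (gnodes G)).+1 st (q - 1) (init, [:: st])).2.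
split=> //; first exact: mem_head.
by move=> y v; rewrite inE => /orP [/eqP [-> ->]|/Hnew []].
Qed.

Section Expanded.
Variables (X : seq (F * nat)) (vis : seq F).
Hypothesis HX : dfs_inv ordr V (q - 1) C vis X.
Hypothesis st_X : (st, q - 1) \in X.
Hypothesis init_prefix : prefix init C.
Hypothesis children_X : forall y v, (y, v) \in X -> children C v = map edge_key (ordr y).

Lemma onth_C_init k : k < q - 1 ->
  onth C k = Some (TEntry k (nth a0 T k) None (if k.+1 == q.-1 then Some st else None)).
Proof. by move=> Hk; apply: onth_prefix init_prefix _; apply: onth_init_tree => //; lia. Qed.

Lemma tparent_init k : k <= q - 1 -> tparent C k = k.-1.
Proof. by case: k => //= k Hk; rewrite onth_C_init. Qed.

Lemma iter_tparent_init j i : j <= q - 1 -> iter i (tparent C) j = j - i.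
Proof.
move=> Hj; elim: i => [|i IH]; first by rewrite subn0.
by rewrite iterS IH tparent_init; lia.
Qed.

Lemma tspell_init j : j <= q - 1 -> tspell C (upath C j j) = take j T.
Proof.
elim: j => [|j IH] Hj; first by rewrite take0.
have Hon := onth_C_init Hj.
rewrite upath_rcons // subn1 /= (tspell_rcons (v := j.+1) _ Hon) /= Hon IH; last lia.
by rewrite (take_nth a0) //; lia.
Qed.

Lemma fingerprint_spells v e y : 0 < v -> onth C v.-1 = Some e -> tfp e = Some y ->
  (forall j, j < q - 1 -> in_tree C (iter j (tparent C) v)) /\
  exists k, [/\ is_qgram (q - 1) T k, phi k = y & tspell C (upath C v (q - 1)) = k].
Proof.
elim/ltn_ind: v e y => v IH e y Hv0 Hv Hy.
have Hvs : v <= size C by have := onth_lt Hv; lia.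
case: (ltnP v.-1 (q - 1)) => Hvq.
  move: Hv; rewrite onth_C_init // => -[Ee]; rewrite -Ee /= in Hy.
  have Ev : v = q - 1 by move: Hy; case: eqP => //; lia.
  split=> [j Hj|]; first by rewrite /in_tree iter_tparent_init; lia.
  exists (take (q - 1) T); split; last by rewrite Ev tspell_init.
  - by apply/qgramP; split; [rewrite size_takel //; lia|exact: infix_take].
  - by move: Hy; rewrite ifT => [[]|]; last by apply/eqP; lia.
have [x [y' [m [Hx He Hf _]]]] := dfs_entry HX Hv Hvq.
rewrite Hf in Hy; case: Hy => Ey; subst y'.
have [Hp0 [e' [He' Hfe']]] := dfs_node HX Hx.
have Hpv : tpar e < v by have := dfs_par HX Hv; lia.
have [Hanc [k0 [Hk0 Hphik0 Hsp]]] := IH _ Hpv e' x Hp0 He' Hfe'.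
have Hpar : tparent C v = tpar e := tparent_entry Hv0 Hv.
have [k [Hk Hkc Hxk Hyk]] := out_edge_qgram He.
have Ek0 : k0 = k by apply: qgram_fp_inj Hk0 (qgram_rcons_take Hk Hkc) _; rewrite Hphik0.
split=> [[|j] Hj|]; first by rewrite /in_tree Hv0.
  by rewrite iterSr Hpar; apply: Hanc; lia.
exists (behead (rcons k (tlab e))); split=> //; first exact: qgram_rcons_behead.
by rewrite (tspell_upath_parent _ Hv) ?Hpar ?Hsp ?Ek0 //; [lia|apply: Hanc; lia].
Qed.

Lemma expanded_spells y v : (y, v) \in X ->
  (forall j, j < q - 1 -> in_tree C (iter j (tparent C) v)) /\
  exists k, [/\ is_qgram (q - 1) T k, phi k = y & tspell C (upath C v (q - 1)) = k].
Proof. by move=> /(dfs_node HX) [Hv0 [e [Ev Hy]]]; exact: fingerprint_spells Ev Hy. Qed.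

Lemma expanded_child x p c y m : (x, p) \in X -> (c, y, m) \in ordr x ->
  exists k e, [/\ onth C k = Some e, q - 1 <= k, tpar e = p, tlab e = c & tfp e = Some y].
Proof.
move=> Hx Hc; have : edge_key (c, y, m) \in children C p by rewrite (children_X Hx) map_f.
rewrite /children => /mapP [e]; rewrite mem_filter => /andP [/eqP Hp /onthP [k Hk]] [Hl Hm Hy].
exists k, e; split=> //; case: (leqP (q - 1) k) => // Hkq.
by move: Hk Hm; rewrite onth_C_init // => -[<-].
Qed.

Lemma window_expanded i : i + (q - 1) <= size T ->
  exists p, (phi (take (q - 1) (drop i T)), p) \in X.
Proof.
elim: i => [|i IH] Hi; first by exists (q - 1); rewrite drop0.
have [p Hp] := IH (ltnW Hi).
have Hs : is_qgram q T (take q (drop i T)) by exists i; split=> //; lia.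
have [m] := qgram_out_edge Hs; rewrite take_takel; last lia.
have -> : take q (drop i T) = take (q - 1).+1 (drop i T) by congr take; lia.
rewrite behead_window => Hm.
have [k [e [Hk Hkq _ _ Hfp]]] := expanded_child Hp Hm.
have [_ [y [_ [_ _ Hfp' Hy]]]] := dfs_entry HX Hk Hkq.
move: Hy; rewrite Hfp' in Hfp; case: Hfp => -> {y Hfp'}.
by rewrite -(dfs_visited HX) => /mapP [[y' p'] Hyp /= ->]; exists p'.
Qed.

Lemma qgram_path_exists s : is_qgram q T s ->
  exists w, (forall j, j < q -> in_tree C (iter j (tparent C) w)) /\ tspell C (upath C w q) = s.
Proof.
move=> Hs; have [Hsz Hsub] := (qgramP _ _ _).1 Hs; case: (Hs) => [i [Hi Es]].
have [p Hp] : exists p, (phi (take (q - 1) s), p) \in X.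
  by rewrite Es take_takel; [apply: window_expanded|]; lia.
have [m Hm] := qgram_out_edge Hs.
have [k [e [Hk _ Hpe Hle _]]] := expanded_child Hp Hm.
have [Hanc [k0 [Hk0 Hphi Hsp]]] := expanded_spells Hp.
have Htake : is_qgram (q - 1) T (take (q - 1) s).
  by apply/qgramP; split; [rewrite size_take_min Hsz; lia|exact: infix_trans (infix_take _ _) Hsub].
have Ek0 : k0 = take (q - 1) s := qgram_fp_inj Hk0 Htake Hphi.
have He : onth C k.+1.-1 = Some e by [].
have Hpw : tparent C k.+1 = p by rewrite (tparent_entry _ He) // Hpe.
exists k.+1; split.
  case=> [|j] Hj; first by rewrite /in_tree /=; have := onth_lt Hk; lia.
  by rewrite iterSr Hpw; apply: Hanc; lia.
rewrite upath_rcons; last lia.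
by rewrite Hpw (tspell_rcons _ He) Hsp Ek0 Hle rcons_take_nth //; rewrite Hsz; lia.
Qed.

Lemma qgram_path_last u s : is_qgram q T s ->
  path (tchild C) (iter q (tparent C) u) (upath C u q) -> tspell C (upath C u q) = s ->
  exists e, [/\ 0 < u, onth C u.-1 = Some e, (phi (take (q - 1) s), tpar e) \in X &
                tlab e = nth a0 s (q - 1)].
Proof.
move=> Hs Hpath Hsp.
have Hanc : 0 < iter (q - 1) (tparent C) u.
  move: Hpath; rewrite -[q in upath _ _ q](subnK (ltnW Hq)) addn1 upathSl /= => /andP [Hc _].
  by have [_ ? _] := tchild_parent Hc.
move: Hpath Hsp; rewrite upath_rcons ?rcons_path; last lia.
move=> /andP [_ Hc]; have [_ Hu0 [e Hu]] := tchild_parent Hc.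
have Huq : q - 1 <= u.-1.
  by case: (leqP (q - 1) u.-1) => // Hlt; move: Hanc; rewrite iter_tparent_init; lia.
have [x [y [m [Hx _ _ _]]]] := dfs_entry HX Hu Huq.
have [_ [k [Hk Hphi Hsp]]] := expanded_spells Hx.
rewrite (tspell_rcons _ Hu) (tparent_entry Hu0 Hu) Hsp => Es.
have Hks : size k = q - 1 by have [] := (qgramP _ _ _).1 Hk.
exists e; split=> //; first by rewrite -Es -cats1 take_size_cat // Hphi.
by rewrite -Es nth_rcons Hks ltnn eqxx.
Qed.

Lemma qgram_path_unique u u' s : is_qgram q T s ->
  path (tchild C) (iter q (tparent C) u) (upath C u q) -> tspell C (upath C u q) = s ->
  path (tchild C) (iter q (tparent C) u') (upath C u' q) -> tspell C (upath C u' q) = s ->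
  u = u'.
Proof.
move=> Hs Hp Hsp Hp' Hsp'.
have [e [Hu0 Hu Hx Hl]] := qgram_path_last Hs Hp Hsp.
have [e' [Hu0' Hu' Hx' Hl']] := qgram_path_last Hs Hp' Hsp'.
have Ep : tpar e = tpar e'.
  have Hfst : uniq (map fst X) by rewrite (dfs_visited HX); exact: dfs_uniq HX.
  by have [] := uniq_map_inj Hfst Hx Hx' erefl.
have Hlab : uniq (map (@tlab _ _) (filter (fun e0 => tpar e0 == tpar e) C)).
  have -> : map (@tlab _ _) (filter (fun e0 => tpar e0 == tpar e) C) =
            map (fun t => t.1.1) (children C (tpar e)) by rewrite /children -map_comp.
  by rewrite (children_X Hx) -map_comp; exact: uniq_out_labels.
have := onth_filter_inj Hlab Hu Hu' (eqxx _) _ _; rewrite Ep eqxx Hl Hl' => /(_ isT erefl).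
lia.
Qed.

End Expanded.

Theorem cs_tree_qgram_path s : is_qgram q T s ->
  exists! p : nat * seq nat, down_path C p.1 p.2 /\ size p.2 = q /\ tspell C p.2 = s.
Proof.
move=> Hs; have [X [vis [HX Hst Hpre Hch]]] := cs_tree_dfs.
have [w [Hw Hsp]] := qgram_path_exists HX Hst Hpre Hch Hs.
have Hpath := upath_path Hw.
exists (iter q (tparent C) w, upath C w q); split.
  split; last by rewrite size_upath.
  split=> //; apply: leq_trans (iter_tparent_le (dfs_par HX) _ _) _.
  by case/andP: (Hw 0 (ltnW Hq)).
move=> [v0 vs] /= [[_ Hp] [Hsz Hsp']].
have [Evs Ev0] := path_upath Hp; rewrite Hsz in Evs Ev0.
move: (last v0 vs) Evs Ev0 => u Evs Ev0; rewrite Evs Ev0 in Hp *; rewrite Evs in Hsp'.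
by rewrite (qgram_path_unique HX Hst Hpre Hch Hs Hp Hsp' Hpath Hsp).
Qed.

End Main.

Theorem lemma8 (A F : eqType) (q : nat) (S : slp A) (phi : seq A -> F)
    (ord : seq nat) (ordr : F -> seq (A * F * nat)) :
  2 <= q ->
  slp_wf S ->
  (forall i, i < size S -> 0 < occ S i) ->
  q <= size (slp_text S) ->
  (forall u v, is_qgram (q - 1) (slp_text S) u -> is_qgram (q - 1) (slp_text S) v ->
     (phi u = phi v <-> u = v)) ->
  perm_eq ord (iota 0 (size S)) ->
  (forall x, perm_eq (ordr x) (out_edges (build_graph phi q S ord) x)) ->
  forall s, is_qgram q (slp_text S) s ->
    let C := cs_tree phi q (slp_text S) (build_graph phi q S ord) ordr in
    exists! p : nat * seq nat,
      down_path C p.1 p.2 /\ size p.2 = q /\ tspell C p.2 = s.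
Proof.
move=> Hq Hwf Hocc HqT Hinj Hperm Hordr s Hs.
have [a0 _] : exists a0 : A, True by case: (slp_text S) HqT => [|a t] /= HqT; [lia|exists a].
exact: (cs_tree_qgram_path a0 Hq Hwf Hocc HqT Hinj Hperm Hordr Hs).
Qed.
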